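(* Consider the continuous-time system $\dot x=Ax+Bu+Lf(t,z)$, $z=Hx$, with $A,B,L$ unknown, $H\in\mathbb{R}^{p\times n}$ known, controlled by $u=Kx+Mf(t,z)$, and data $U_0,X_0,X_1,F_0$ (with $X_1$ containing sampled state derivatives) satisfying $X_1=AX_0+BU_0+LF_0$. Suppose there exist $Y_1\in\mathbb{R}^{T\times n}$, $Y_2\in\mathbb{R}^{T\times p}$ such that $X_0Y_1$ is symmetric positive definite, $Y_1^\top X_1^\top+X_1Y_1\prec 0$, $X_1Y_2+X_0Y_1H^\top=0$, $X_0Y_2=0$, $F_0Y_2=I_p$, $F_0Y_1=0$. Then with $K=U_0Y_1(X_0Y_1)^{-1}$ and $M=U_0Y_2$, the origin of $\dot x=(A+BK)x+(L+BM)f(t,Hx)$ is globally uniformly asymptotically stable for every $f:\mathbb{R}\times\mathbb{R}^p\to\mathbb{R}^p$ (piecewise continuous in $t$, locally Lipschitz in $z$) satisfying $z^\top f(t,z)\ge 0$ for all $t,z$.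
   Context: Data: $U_0=[u(t_0)\cdots u(t_{T-1})]$, $X_0=[x(t_0)\cdots x(t_{T-1})]$, $X_1=[\dot x(t_0)\cdots\dot x(t_{T-1})]$, $F_0=[f(t_0,z(t_0))\cdots f(t_{T-1},z(t_{T-1}))]$ from an experiment on the system. *)

From HB Require Import structures.
From mathcomp Require Import all_boot all_order all_algebra.
From mathcomp Require Import all_classical all_reals all_analysis.
Set Implicit Arguments. Unset Strict Implicit. Unset Printing Implicit Defensive.
Import Order.TTheory GRing.Theory Num.Theory.
Import numFieldNormedType.Exports.
Local Open Scope classical_set_scope.
Local Open Scope ring_scope.

Section Defs.
Variable R : realType.

Definition qform n (S : 'M[R]_n) (v : 'cV[R]_n) : R := (v^T *m S *m v) 0 0.

Definition posdef n (S : 'M[R]_n) : Prop :=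
  S^T = S /\ forall v : 'cV[R]_n, v != 0 -> 0 < qform S v.

Definition negdef n (S : 'M[R]_n) : Prop :=
  S^T = S /\ forall v : 'cV[R]_n, v != 0 -> qform S v < 0.

Definition piecewise_continuous_t p (f : R -> 'cV[R]_p -> 'cV[R]_p) : Prop :=
  forall a b : R, exists s : seq R, forall t z, a <= t <= b -> t \notin s ->
    {for (t, z), continuous (fun q : R * 'cV[R]_p => f q.1 q.2)}.

Definition locally_lipschitz_z p (f : R -> 'cV[R]_p -> 'cV[R]_p) : Prop :=
  forall (z0 : 'cV[R]_p) (a b : R), exists r Lc : R, 0 < r /\
    forall t z1 z2, a <= t <= b -> `|z1 - z0| < r -> `|z2 - z0| < r ->
      `|f t z1 - f t z2| <= Lc * `|z1 - z2|.

Definition sector p (f : R -> 'cV[R]_p -> 'cV[R]_p) : Prop :=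
  forall t (z : 'cV[R]_p), 0 <= (z^T *m f t z) 0 0.

(* x is a solution of dx/dt = F(t,x) on [t0, t1): continuous there, and
   differentiable with derivative F(t, x t) at every t in (t0,t1) outside a
   set of exceptional times that is finite on every bounded interval
   (allowing the kinks caused by piecewise continuity in t). *)
Definition is_solution n (F : R -> 'cV[R]_n -> 'cV[R]_n) (t0 t1 : R)
    (x : R -> 'cV[R]_n) : Prop :=
  t0 < t1 /\
  {within [set t | t0 <= t < t1], continuous x} /\
  exists D : set R, (forall a b : R, finite_set (D `&` [set t | a <= t <= b])) /\
    forall t, t0 < t < t1 -> ~ D t -> is_derive t 1 x (F t (x t)).

(* Global uniform asymptotic stability of the origin (Khalil, Def. 4.4):
   uniform stability, global uniform boundedness, global uniform attractivity,
   for every solution on every interval [t0, t1). *)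
Definition GUAS n (F : R -> 'cV[R]_n -> 'cV[R]_n) : Prop :=
  (forall e : R, 0 < e -> exists d : R, 0 < d /\
     forall t0 t1 x, is_solution F t0 t1 x -> `|x t0| < d ->
       forall t, t0 <= t < t1 -> `|x t| < e) /\
  (forall a : R, 0 < a -> exists c : R, 0 < c /\
     forall t0 t1 x, is_solution F t0 t1 x -> `|x t0| < a ->
       forall t, t0 <= t < t1 -> `|x t| < c) /\
  (forall eta e : R, 0 < eta -> 0 < e -> exists T : R, 0 < T /\
     forall t0 t1 x, is_solution F t0 t1 x -> `|x t0| < eta ->
       forall t, t0 + T <= t < t1 -> `|x t| < e).

End Defs.

From HB Require Import structures.
From mathcomp Require Import all_boot all_order all_algebra.
From mathcomp Require Import all_classical all_reals all_analysis.
From mathcomp Require Import ring lra.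
Set Implicit Arguments. Unset Strict Implicit. Unset Printing Implicit Defensive.
Import Order.TTheory GRing.Theory Num.Theory.
Import numFieldNormedType.Exports.
Local Open Scope ring_scope.

(* Write S = X0 Y1 (positive definite by hypothesis) and Q = S^-1.  The data
   identity X1 = A X0 + B U0 + L F0 together with the constraints on Y1, Y2
   turns the closed loop into
       dx/dt = Z Q x - S H^T f(t, Hx),      Z = X1 Y1,
   so that along it V(x) = x^T Q x changes at rate
       (Qx)^T (Z^T + Z) (Qx) - 2 (Hx)^T f(t, Hx) <= - x^T P x,
   with P = - Q (Z^T + Z) Q positive definite (Z^T + Z is negative definite)
   and the sector condition killing the cross term. *)

Section Monotonicity.
Context {R : realType}.
Local Open Scope classical_set_scope.
Variables (W : R -> R) (t0 t1 : R) (D : set R).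
Hypothesis W_cont : {within [set t | t0 <= t < t1], continuous W}.
Hypothesis W_deriv :
  forall t, t0 < t < t1 -> ~ D t -> derivable W t 1 /\ 'D_1 W t <= 0.

(* Mean value theorem: W does not increase across a subinterval of
   [t0, t1) free of exceptional points. *)
Lemma nonincr_regular s u : t0 <= s -> s <= u -> u < t1 ->
  (forall x, s < x < u -> ~ D x) -> W u <= W s.
Proof.
move=> t0s + ut1 regular.
case: ltgtP => // [su _|-> _]; last by [].
have inside x : s < x < u -> t0 < x < t1.
  by move=> /andP[sx xu]; rewrite (le_lt_trans t0s sx) (lt_trans xu ut1).
have W_is_derive x : x \in `]s, u[%R -> is_derive x 1 W ('D_1 W x).
  rewrite in_itv /= => sxu.
  by apply/derivableP; case: (W_deriv (inside x sxu) (regular x sxu)).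
have W_cont_su : {within `[s, u], continuous W}.
  apply: continuous_subspaceW W_cont => x /=; rewrite in_itv /= => /andP[sx xu].
  by rewrite (le_trans t0s sx) (le_lt_trans xu ut1).
have [c + mvt] := MVT su W_is_derive W_cont_su.
rewrite in_itv /= => scu.
rewrite -subr_le0 mvt mulr_le0_ge0 ?subr_ge0 ?(ltW su) //.
by have [] := W_deriv (inside c scu) (regular c scu).
Qed.

(* Induction on a list [l] covering the exceptional points of [(s, u)]:
   split the interval at every exceptional point it contains. *)
Lemma nonincr_finite_breaks (l : seq R) s u : t0 <= s -> s <= u -> u < t1 ->
  (forall x, s < x < u -> D x -> x \in l) -> W u <= W s.
Proof.
elim: l s u => [|d l IH] s u t0s su ut1 covered.
  by apply: nonincr_regular => // x sxu /(covered x sxu).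
have [/andP[sd du]|d_out] := boolP (s < d < u).
- apply: (@le_trans _ _ (W d)).
  + apply: IH (le_trans t0s (ltW sd)) (ltW du) ut1 _ => x /andP[dx xu] Dx.
    move: (covered x); rewrite (lt_trans sd dx) xu inE gt_eqF //=.
    exact.
  + apply: IH t0s (ltW sd) (lt_trans du ut1) _ => x /andP[sx xd] Dx.
    move: (covered x); rewrite sx (lt_trans xd du) inE lt_eqF //=.
    exact.
- apply: IH => // x sxu Dx; move: (covered x sxu Dx); rewrite inE.
  by case: eqP => [xd|//]; move: d_out; rewrite -xd sxu.
Qed.

Lemma nonincr_except_locally_finite :
  (forall a b : R, finite_set (D `&` [set t | a <= t <= b])) ->
  forall s u, t0 <= s -> s <= u -> u < t1 -> W u <= W s.
Proof.
move=> D_fin s u t0s su ut1.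
have /finite_fsetP[l El] := D_fin s u.
apply: (@nonincr_finite_breaks (finmap.enum_fset l)) => // x /andP[sx xu] Dx.
have : (D `&` [set t | s <= t <= u]) x by split; rewrite //= !ltW.
by rewrite El.
Qed.

End Monotonicity.

Section QuadraticForms.
Context {R : realType}.
Local Open Scope classical_set_scope.

Lemma bilinear_sumE n (M : 'M[R]_n) (u w : 'cV[R]_n) :
  (u^T *m M *m w) 0 0 = \sum_j \sum_i u i 0 * M i j * w j 0.
Proof.
rewrite mxE; apply: eq_bigr => j _; rewrite mxE big_distrl /=.
by apply: eq_bigr => i _; rewrite mxE.
Qed.

(* A quadratic form is a polynomial in the coordinates, hence continuous. *)
Lemma qform_continuous n (M : 'M[R]_n) : continuous (qform M).
Proof.
have -> : qform M = \sum_j \sum_i ((fun w : 'cV[R]_n => w i 0) *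
    cst (M i j) * (fun w : 'cV[R]_n => w j 0)).
  apply/funext => w; rewrite /qform bilinear_sumE !fct_sumE.
  by apply: eq_bigr => j _; rewrite !fct_sumE.
move=> w; apply: differentiable_continuous.
apply: differentiable_sum => j; apply: differentiable_sum => i.
apply: differentiableM; first apply: differentiableM.
- exact: differentiable_coord.
- exact: differentiable_cst.
- exact: differentiable_coord.
Qed.

Lemma qformZ n (M : 'M[R]_n) (k : R) v : qform M (k *: v) = k ^+ 2 * qform M v.
Proof.
by rewrite /qform !linearZ /= -!scalemxAl !mxE mulrA -expr2.
Qed.

Lemma qform0 n (M : 'M[R]_n) : qform M 0 = 0.
Proof. by rewrite /qform trmx0 !mul0mx mxE. Qed.

Lemma qformN n (M : 'M[R]_n) v : qform (- M) v = - qform M v.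
Proof. by rewrite /qform mulmxN mulNmx mxE. Qed.

Lemma qform_congr n (Q N : 'M[R]_n) v :
  Q^T = Q -> qform (Q *m N *m Q) v = qform N (Q *m v).
Proof. by move=> QT; rewrite /qform trmx_mul QT !mulmxA. Qed.

Lemma mx_entry_le a b (N : 'M[R]_(a, b)) i j : `|N i j| <= `|N|.
Proof.
by rewrite [leRHS]/Num.Def.normr /= mx_normrE (le_bigmax _ _ (i, j)).
Qed.

Lemma mx_norm_le a b (N : 'M[R]_(a, b)) e : 0 <= e ->
  (forall i j, `|N i j| <= e) -> `|N| <= e.
Proof.
move=> e0 Ne; rewrite [leLHS]/Num.Def.normr /= mx_normrE.
by apply: bigmax_le => // -[i j] _; exact: Ne.
Qed.

Lemma normr_trmx a b (N : 'M[R]_(a, b)) : `|N^T| = `|N|.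
Proof.
apply/le_anti/andP; split; apply: mx_norm_le => // i j.
- by rewrite mxE; exact: mx_entry_le.
- by have := mx_entry_le N^T j i; rewrite mxE.
Qed.

Lemma trmx_continuous a b : continuous (@trmx R a b).
Proof.
move=> N s /nbhs_ballP[e e0 es]; apply/nbhs_ballP; exists e => // N'.
rewrite mx_norm_ball /ball_ /= => NN'; apply: es.
by rewrite mx_norm_ball /ball_ /= -linearB normr_trmx.
Qed.

(* A positive definite quadratic form is comparable to the squared norm:
   compare it with its extrema on the (compact) unit sphere. *)
Lemma qform_bounds n (M : 'M[R]_n) : (forall v, v != 0 -> 0 < qform M v) ->
  exists c C : R, 0 < c /\ c <= C /\
    forall v, c * `|v| ^+ 2 <= qform M v /\ qform M v <= C * `|v| ^+ 2.
Proof.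
case: n M => [|n] M Mpos.
  exists 1, 1; split => //; split => // v.
  by rewrite [v]flatmx0 qform0 normr0 expr0n /= mulr0.
pose g (w : 'rV[R]_n.+1) := qform M w^T.
pose sphere := [set w : 'rV[R]_n.+1 | `|w| = 1].
have one_sphere : sphere (const_mx 1).
  rewrite /sphere /=; apply/le_anti/andP; split.
    by apply: mx_norm_le => // i j; rewrite mxE normr1.
  by have := mx_entry_le (const_mx 1 : 'rV[R]_n.+1) 0 0; rewrite mxE normr1.
have sphere_compact : compact sphere.
  apply: bounded_closed_compact.
    exists 1; split; first exact: real1.
    by move=> y y1 w /= ->; exact: ltW.
  have -> : sphere = (@Num.Def.normr _ _) @^-1` [set 1] by [].
  by apply: closed_comp; [move=> *; exact: norm_continuous|exact: closed_eq].
have g_cont : {within sphere, continuous g}.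
  apply: continuous_subspaceT => w.
  by apply: continuous_comp; [exact: trmx_continuous|exact: qform_continuous].
have [wmin + gmin] := EVT_min_rV (ex_intro _ _ one_sphere) sphere_compact g_cont.
have [wmax + gmax] := EVT_max_rV (ex_intro _ _ one_sphere) sphere_compact g_cont.
rewrite !inE /sphere /= => wmax1 wmin1.
have gmin_gt0 : 0 < g wmin.
  apply: Mpos; rewrite -normr_eq0 normr_trmx wmin1; exact: oner_neq0.
exists (g wmin), (g wmax); split => //; split.
  by apply: gmin; rewrite inE /sphere /= wmax1.
move=> v; have [->|v0] := eqVneq v 0.
  by rewrite qform0 normr0 expr0n /= !mulr0.
have nv0 : 0 < `|v| by rewrite normr_gt0.
have unit_v : sphere (`|v|^-1 *: v)^T.
  rewrite /sphere /= normr_trmx normrZ normrV ?unitfE ?gt_eqF //.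
  by rewrite normr_id mulVf ?gt_eqF.
have -> : qform M v = g (`|v|^-1 *: v)^T * `|v| ^+ 2.
  by rewrite /g trmxK qformZ exprVn mulrC mulrA divff ?mul1r // expf_neq0 ?gt_eqF.
have sq_ge0 : 0 <= `|v| ^+ 2 by rewrite exprn_ge0.
by split; apply: ler_wpM2r => //; [apply: gmin|apply: gmax]; rewrite inE.
Qed.

Lemma posdef_unit n (S : 'M[R]_n) : posdef S -> S \in unitmx.
Proof.
move=> [_ Spos]; rewrite -row_free_unit -kermx_eq0; apply/negPn/negP => K0.
have /existsP [i Ki] : [exists i, row i (kermx S) != 0].
  apply: contraR K0 => /existsPn K0; apply/eqP/row_matrixP => i.
  by rewrite row0; exact/eqP/negPn/K0.
have KS : row i (kermx S) *m S = 0 by rewrite -row_mul mulmx_ker row0.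
have := Spos (row i (kermx S))^T; rewrite trmx_eq0 => /(_ Ki).
by rewrite /qform trmxK KS mul0mx mxE ltxx.
Qed.

Lemma posdef_inv n (S : 'M[R]_n) : posdef S -> posdef (invmx S).
Proof.
move=> Spd; have Su := posdef_unit Spd; case: Spd => ST Spos.
split; first by rewrite trmx_inv ST.
move=> v v0; have <- : qform S (invmx S *m v) = qform (invmx S) v.
  by rewrite -qform_congr ?trmx_inv ?ST // mulVmx // mul1mx.
apply: Spos; apply: contraNneq v0 => Sv0.
by rewrite -[v]mul1mx -(mulmxV Su) -mulmxA Sv0 mulmx0.
Qed.

Lemma negdef_congr n (Q N : 'M[R]_n) :
  posdef Q -> negdef N -> posdef (- (Q *m N *m Q)).
Proof.
move=> Qpd [NT Nneg]; have Qu := posdef_unit Qpd; case: Qpd => QT _.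
split; first by rewrite linearN /= !trmx_mul QT NT mulmxA.
move=> v v0; rewrite qformN qform_congr // oppr_gt0; apply: Nneg.
apply: contraNneq v0 => Qv0.
by rewrite -[v]mul1mx -(mulVmx Qu) -mulmxA Qv0 mulmx0.
Qed.

End QuadraticForms.

Section LyapunovDecay.
Context {R : realType}.
Local Open Scope classical_set_scope.

Lemma entry_is_derive m n (x : R -> 'M[R]_(m, n)) (t : R) v i j :
  is_derive t 1 x v -> is_derive t 1 (fun s => x s i j) (v i j).
Proof.
move=> [dx Dx]; apply: DeriveDef; first exact: (derivable_mxP x t 1).1 dx i j.
by have := derive_mx dx; rewrite Dx => /matrixP/(_ i j); rewrite mxE.
Qed.

Lemma bilinear_is_derive n (M : 'M[R]_n) (a b : R -> 'cV[R]_n) (t : R) da db :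
  is_derive t 1 a da -> is_derive t 1 b db ->
  is_derive t 1 (fun s => ((a s)^T *m M *m b s) 0 0)
    ((da^T *m M *m b t) 0 0 + ((a t)^T *m M *m db) 0 0).
Proof.
move=> a' b'.
have -> : (fun s => ((a s)^T *m M *m b s) 0 0) =
    \sum_j \sum_i ((fun s => a s i 0) * cst (M i j) * (fun s => b s j 0)).
  apply/funext => s; rewrite bilinear_sumE !fct_sumE.
  by apply: eq_bigr => j _; rewrite !fct_sumE.
apply: is_derive_eq.
  apply: is_derive_sum => j; apply: is_derive_sum => i.
  apply: is_deriveM; last exact: entry_is_derive.
  by apply: is_deriveM; exact: entry_is_derive.
rewrite !bilinear_sumE -big_split /=; apply: eq_bigr => j _.
rewrite -big_split /=; apply: eq_bigr => i _.
rewrite /= scaler0 add0r /GRing.scale /=.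
have -> : ((fun s => a s i 0) * cst (M i j)) t = a t i 0 * M i j by [].
ring.
Qed.

Lemma expR_affine_is_derive (k t0 s : R) :
  is_derive s 1 (fun s => expR (k * (s - t0))) (expR (k * (s - t0)) * k).
Proof.
have affine : is_derive s 1 (fun s : R => k * (s - t0)) k.
  have -> : (fun s : R => k * (s - t0)) = k \*: ((@id R) - cst t0).
    by apply/funext.
  by apply: is_derive_eq; rewrite /= subr0 /GRing.scale /= mulr1.
exact: (@is_derive1_comp _ expR (fun s : R => k * (s - t0)) s _ _ _ affine).
Qed.

Definition lyap_rate n (Q : 'M[R]_n) (F : R -> 'cV[R]_n -> 'cV[R]_n) t v :=
  ((F t v)^T *m Q *m v) 0 0 + (v^T *m Q *m F t v) 0 0.

Variables (n : nat) (F : R -> 'cV[R]_n -> 'cV[R]_n) (Q : 'M[R]_n) (k : R).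
Hypothesis rate_le : forall t v, lyap_rate Q F t v <= - (k * qform Q v).

Lemma weighted_lyap_nonincr t0 t1 x : is_solution F t0 t1 x ->
  forall t, t0 <= t < t1 ->
    expR (k * (t - t0)) * qform Q (x t) <= qform Q (x t0).
Proof.
move=> [_ [x_cont [D [D_fin x_deriv]]]] t /andP[t0t tt1].
pose E s := expR (k * (s - t0)).
pose W := E \* (qform Q \o x).
have W_deriv s : t0 < s < t1 -> ~ D s -> derivable W s 1 /\ 'D_1 W s <= 0.
  move=> st Ds; have x' := x_deriv s st Ds.
  have W' := is_deriveM (expR_affine_is_derive k t0 s)
    (bilinear_is_derive Q x' x').
  split; first exact: ex_derive.
  rewrite derive_val /GRing.scale /= -/(lyap_rate Q F s (x s)).
  have := rate_le s (x s); rewrite /qform.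
  have : 0 < expR (k * (s - t0)) by exact: expR_gt0.
  nra.
have W_cont : {within [set s | t0 <= s < t1], continuous W}.
  have E_cont : {within [set s | t0 <= s < t1], continuous E}.
    apply: continuous_subspaceT => s; apply: differentiable_continuous.
    by apply/derivable1_diffP; case: (expR_affine_is_derive k t0 s).
  move=> s; apply: continuousM; first exact: E_cont.
  by apply: continuous_comp; [exact: x_cont|exact: qform_continuous].
have := nonincr_except_locally_finite W_cont W_deriv D_fin (lexx t0) t0t tt1.
by rewrite /W /E /= subrr mulr0 expR0 mul1r.
Qed.

Lemma lyap_exp_estimate c1 c2 :
  (forall v, c1 * `|v| ^+ 2 <= qform Q v /\ qform Q v <= c2 * `|v| ^+ 2) ->
  forall t0 t1 x, is_solution F t0 t1 x -> forall t, t0 <= t < t1 ->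
    c1 * `|x t| ^+ 2 * expR (k * (t - t0)) <= c2 * `|x t0| ^+ 2.
Proof.
move=> bounds t0 t1 x sol t tt.
have := weighted_lyap_nonincr sol tt.
have [lower _] := bounds (x t); have [_ upper] := bounds (x t0).
have : 0 < expR (k * (t - t0)) by exact: expR_gt0.
nra.
Qed.

End LyapunovDecay.

Section ExponentialEstimate.
Context {R : realType}.
Variables (n : nat) (F : R -> 'cV[R]_n -> 'cV[R]_n) (k c1 c2 : R).
Hypotheses (k_gt0 : 0 < k) (c1_gt0 : 0 < c1) (c12 : c1 <= c2).
Hypothesis estimate : forall t0 t1 x, is_solution F t0 t1 x ->
  forall t, t0 <= t < t1 ->
    c1 * `|x t| ^+ 2 * expR (k * (t - t0)) <= c2 * `|x t0| ^+ 2.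

Let c2_gt0 : 0 < c2. Proof. exact: lt_le_trans c12. Qed.

Lemma estimate_norm_lt t0 t1 x t e : is_solution F t0 t1 x -> t0 <= t < t1 ->
  0 <= e -> c2 * `|x t0| ^+ 2 < c1 * e ^+ 2 * expR (k * (t - t0)) ->
  `|x t| < e.
Proof.
move=> sol tt e_ge0 init_lt; have := estimate sol tt.
have E_gt0 : 0 < c1 * expR (k * (t - t0)) by rewrite mulr_gt0 ?expR_gt0.
rewrite -(@ltr_pXn2r _ 2) ?nnegrE // -(ltr_pM2l E_gt0).
lra.
Qed.

Lemma estimate_stable t0 t1 x e : is_solution F t0 t1 x -> 0 < e ->
  `|x t0| < e * (c1 / c2) -> forall t, t0 <= t < t1 -> `|x t| < e.
Proof.
move=> sol e_gt0 x0_lt t /[dup] tt /andP[t0t _].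
apply: (estimate_norm_lt sol tt); first exact: ltW.
have q_gt0 : 0 < c1 / c2 by rewrite divr_gt0.
have q_le1 : c1 / c2 <= 1 by rewrite ler_pdivrMr // mul1r.
have x0_sq : `|x t0| ^+ 2 < (e * (c1 / c2)) ^+ 2.
  by rewrite ltr_pXn2r ?nnegrE //; exact/ltW/mulr_gt0.
have E_ge1 : 1 <= expR (k * (t - t0)).
  by apply: le_trans (expR_ge1Dx _); rewrite lerDl mulr_ge0 ?subr_ge0 // ltW.
have scaled : c2 * (e * (c1 / c2)) ^+ 2 = c1 * e ^+ 2 * (c1 / c2).
  by field; rewrite gt_eqF.
have esq_gt0 : 0 < c1 * e ^+ 2 by rewrite mulr_gt0 ?exprn_gt0.
apply: (@lt_le_trans _ _ (c2 * (e * (c1 / c2)) ^+ 2)).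
  by rewrite ltr_pM2l.
rewrite scaled; apply: (@le_trans _ _ (c1 * e ^+ 2)).
  exact: ler_piMr (ltW esq_gt0) q_le1.
exact: ler_peMr (ltW esq_gt0) E_ge1.
Qed.

Lemma estimate_attractive t0 t1 x eta e : is_solution F t0 t1 x ->
  0 < e -> `|x t0| < eta ->
  forall t, t0 + c2 * eta ^+ 2 / (c1 * e ^+ 2 * k) <= t < t1 -> `|x t| < e.
Proof.
move=> sol e_gt0 x0_lt t /andP[Tt tt1].
set T := c2 * eta ^+ 2 / (c1 * e ^+ 2 * k) in Tt.
have esq_gt0 : 0 < c1 * e ^+ 2 by rewrite mulr_gt0 ?exprn_gt0.
have T_ge0 : 0 <= T.
  by rewrite divr_ge0 ?(mulr_ge0 (ltW c2_gt0) (sqr_ge0 eta)) ?ltW ?mulr_gt0.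
have t0t : t0 <= t by rewrite (le_trans _ Tt) // lerDl.
apply: (estimate_norm_lt sol); [by rewrite t0t|exact: ltW|].
have kT : c1 * e ^+ 2 * (k * T) = c2 * eta ^+ 2.
  by rewrite /T; field; rewrite !gt_eqF.
have E_ge : 1 + k * T <= expR (k * (t - t0)).
  apply: le_trans (expR_ge1Dx _); rewrite lerD2l ler_pM2l //; lra.
have x0_sq : `|x t0| ^+ 2 < eta ^+ 2.
  by rewrite ltr_pXn2r ?nnegrE ?(le_trans _ (ltW x0_lt)).
apply: (@lt_le_trans _ _ (c1 * e ^+ 2 * (1 + k * T))); last first.
  by rewrite ler_pM2l.
rewrite mulrDr mulr1 kT (@lt_le_trans _ _ (c2 * eta ^+ 2)) ?ltr_pM2l //.
by rewrite lerDr ltW.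
Qed.

Lemma exp_estimate_GUAS : GUAS F.
Proof.
have q_gt0 : 0 < c1 / c2 by rewrite divr_gt0.
split; [|split].
- move=> e e_gt0; exists (e * (c1 / c2)); split; first by rewrite mulr_gt0.
  by move=> t0 t1 x sol; exact: estimate_stable.
- move=> a a_gt0; exists (a / (c1 / c2)); split; first by rewrite divr_gt0.
  move=> t0 t1 x sol x0_lt; apply: estimate_stable; rewrite ?divr_gt0 //.
  by rewrite divfK ?gt_eqF.
- move=> eta e eta_gt0 e_gt0; exists (c2 * eta ^+ 2 / (c1 * e ^+ 2 * k)).
  split; first by rewrite divr_gt0 ?mulr_gt0 ?exprn_gt0.
  by move=> t0 t1 x sol; exact: estimate_attractive.
Qed.

End ExponentialEstimate.

Lemma quadratic_lyapunov_GUAS {R : realType} n (F : R -> 'cV[R]_n -> 'cV[R]_n)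
    (Q P : 'M[R]_n) :
  posdef Q -> posdef P -> (forall t v, lyap_rate Q F t v <= - qform P v) ->
  GUAS F.
Proof.
move=> [_ Qpos] [_ Ppos] rate_le.
have [c1 [c2 [c1_gt0 [c12 Qbounds]]]] := qform_bounds Qpos.
have [c3 [C3 [c3_gt0 [_ Pbounds]]]] := qform_bounds Ppos.
have c2_gt0 : 0 < c2 := lt_le_trans c1_gt0 c12.
have k_gt0 : 0 < c3 / c2 by rewrite divr_gt0.
have rate_decay t v : lyap_rate Q F t v <= - (c3 / c2 * qform Q v).
  have [_ Qv_le] := Qbounds v; have [Pv_ge _] := Pbounds v.
  have : c3 / c2 * qform Q v <= c3 * `|v| ^+ 2.
    by rewrite -ler_pdivlMl // invf_div mulrA divfK ?gt_eqF // mulrC.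
  have := rate_le t v; lra.
apply: (exp_estimate_GUAS k_gt0 c1_gt0 c12).
exact: lyap_exp_estimate rate_decay _ _ Qbounds.
Qed.

Section DataDrivenClosedLoop.
Context {R : realType}.
Variables (n m p T : nat) (A : 'M[R]_n) (B : 'M[R]_(n, m)) (L : 'M[R]_(n, p)).
Variables (U0 : 'M[R]_(m, T)) (X0 X1 : 'M[R]_(n, T)) (F0 : 'M[R]_(p, T)).
Hypothesis data : X1 = A *m X0 + B *m U0 + L *m F0.

Lemma closed_loop_state (Y1 : 'M[R]_(T, n)) :
  X0 *m Y1 \in unitmx -> F0 *m Y1 = 0 ->
  A + B *m (U0 *m Y1 *m invmx (X0 *m Y1)) = X1 *m Y1 *m invmx (X0 *m Y1).
Proof.
move=> S_unit F0Y1.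
rewrite data !mulmxDl -!(mulmxA _ _ Y1) F0Y1 mulmx0 mul0mx addr0.
by rewrite -(mulmxA A) mulmxV // mulmx1 !mulmxA.
Qed.

Lemma closed_loop_nonlinearity (Y1 : 'M[R]_(T, n)) (Y2 : 'M[R]_(T, p))
    (H : 'M[R]_(p, n)) :
  X1 *m Y2 + X0 *m Y1 *m H^T = 0 -> X0 *m Y2 = 0 -> F0 *m Y2 = 1%:M ->
  L + B *m (U0 *m Y2) = - (X0 *m Y1 *m H^T).
Proof.
move=> X1Y2 X0Y2 F0Y2; apply/eqP; rewrite -addr_eq0 -X1Y2 data.
by rewrite !mulmxDl -!mulmxA X0Y2 F0Y2 mulmx0 add0r mulmx1 [L + _]addrC.
Qed.

End DataDrivenClosedLoop.

Lemma trmx_scalar11 {R : realType} (a : 'M[R]_1) : a^T = a.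
Proof. by apply/matrixP => i j; rewrite !ord1 mxE. Qed.

Lemma closed_loop_rate {R : realType} n p (Z Q S : 'M[R]_n) (H : 'M[R]_(p, n))
    (g : R -> 'cV[R]_p -> 'cV[R]_p) t v :
  Q^T = Q -> Q *m S = 1%:M ->
  lyap_rate Q (fun t v => Z *m Q *m v + - (S *m H^T) *m g t (H *m v)) t v =
  qform (Z^T + Z) (Q *m v) - 2 * ((H *m v)^T *m g t (H *m v)) 0 0.
Proof.
move=> QT QS; rewrite /lyap_rate mulNmx.
set w := Z *m Q *m v - _.
have sym : w^T *m Q *m v = v^T *m Q *m w.
  by rewrite -[LHS]trmx_scalar11 !trmx_mul trmxK QT mulmxA.
have cross : v^T *m Q *m w =
    (Q *m v)^T *m Z *m (Q *m v) - (H *m v)^T *m g t (H *m v).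
  rewrite mulmxDr mulmxN; congr (_ - _); first by rewrite trmx_mul QT !mulmxA.
  by rewrite trmx_mul !mulmxA -(mulmxA _ Q S) QS mulmx1.
have sym_part : qform (Z^T + Z) (Q *m v) =
    2 * ((Q *m v)^T *m Z *m (Q *m v)) 0 0.
  rewrite /qform mulmxDr mulmxDl [LHS]mxE.
  have -> : (Q *m v)^T *m Z^T *m (Q *m v) = ((Q *m v)^T *m Z *m (Q *m v))^T.
    by rewrite !trmx_mul !trmxK !mulmxA.
  by rewrite trmx_scalar11 mulr_natl mulr2n.
by rewrite sym cross sym_part !mxE; ring.
Qed.

Theorem mainTheorem5 (R : realType) (n m p T : nat)
  (A : 'M[R]_n) (B : 'M[R]_(n, m)) (L : 'M[R]_(n, p)) (H : 'M[R]_(p, n))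
  (U0 : 'M[R]_(m, T)) (X0 X1 : 'M[R]_(n, T)) (F0 : 'M[R]_(p, T))
  (Y1 : 'M[R]_(T, n)) (Y2 : 'M[R]_(T, p)) :
  X1 = A *m X0 + B *m U0 + L *m F0 ->
  posdef (X0 *m Y1) ->
  negdef (Y1^T *m X1^T + X1 *m Y1) ->
  X1 *m Y2 + X0 *m Y1 *m H^T = 0 ->
  X0 *m Y2 = 0 ->
  F0 *m Y2 = 1%:M ->
  F0 *m Y1 = 0 ->
  let K := U0 *m Y1 *m invmx (X0 *m Y1) in
  let M := U0 *m Y2 in
  forall f : R -> 'cV[R]_p -> 'cV[R]_p,
    piecewise_continuous_t f -> locally_lipschitz_z f -> sector f ->
    GUAS (fun (t : R) (x : 'cV[R]_n) =>
            (A + B *m K) *m x + (L + B *m M) *m f t (H *m x)).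
Proof.
move=> data S_pd N_nd X1Y2 X0Y2 F0Y2 F0Y1 K M f _ _ sector_f.
have Q_pd := posdef_inv S_pd; have [Q_sym _] := Q_pd.
have Z_nd : negdef ((X1 *m Y1)^T + X1 *m Y1) by rewrite trmx_mul.
rewrite /K /M (closed_loop_state data) ?posdef_unit //.
rewrite (closed_loop_nonlinearity data X1Y2 X0Y2 F0Y2).
apply: (quadratic_lyapunov_GUAS Q_pd (negdef_congr Q_pd Z_nd)) => t v.
rewrite closed_loop_rate ?mulVmx ?posdef_unit // qformN opprK qform_congr //.
by have := sector_f t (H *m v); lra.
Qed.
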